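(* Let $\gamma\in V$ and let $A\subset S^1$ be a closed subset with $A\neq S^1$. Then there exists $g\in V$ such that $A$ is weakly $\gamma^g$-wandering, where $\gamma^g=g^{-1}\gamma g$.
   Context: $S^1$ is the interval $[0,1]$ with $0$ and $1$ identified. Thompson's group $V$ is the group of left-continuous bijections of $S^1$ which map finite dyadic fractions to finite dyadic fractions, are differentiable except at finitely many finite dyadic fractions, and on each maximal interval of differentiability are linear with slope an integer power of $2$. For $\gamma\in V$, a subset $U\subseteq S^1$ is weakly $\gamma$-wandering if for every $n\in\mathbb{Z}$, either $\gamma^n$ fixes $U$ pointwise or $\gamma^n(U)\cap U=\emptyset$. *)

From Stdlib Require Import Reals Lra Lia ZArith ClassicalEpsilon.
Open Scope R_scope.

(* The circle S^1 = [0,1] with 0 ~ 1, represented by the half-open interval (0,1]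
   (the point 0 = 1 is represented by 1). *)
Definition S1 (x : R) : Prop := 0 < x <= 1.

Definition dyadic (x : R) : Prop := exists (m : Z) (k : nat), x = IZR m / 2 ^ k.

(* Elements of Thompson's group V, as maps R -> R whose restriction to (0,1]
   is the circle map.  Left-continuous, piecewise linear with slopes powers of 2
   and finitely many dyadic breakpoints: on each (a_i, a_(i+1)] of a dyadic
   subdivision 0 = a_0 < ... < a_n = 1 the map is affine with slope 2^k_i. *)
Definition in_V (f : R -> R) : Prop :=
  (forall x, S1 x -> S1 (f x)) /\
  (forall x y, S1 x -> S1 y -> f x = f y -> x = y) /\
  (forall y, S1 y -> exists x, S1 x /\ f x = y) /\
  (forall x, S1 x -> dyadic x -> dyadic (f x)) /\
  exists (n : nat) (a : nat -> R),
    a 0%nat = 0 /\ a n = 1 /\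
    (forall i, (i < n)%nat -> a i < a (S i)) /\
    (forall i, (i <= n)%nat -> dyadic (a i)) /\
    (forall i, (i < n)%nat -> exists (k : Z) (c : R),
        forall x, a i < x <= a (S i) -> f x = powerRZ 2 k * x + c).

Definition circ_inv (f : R -> R) (y : R) : R :=
  epsilon (inhabits 1) (fun x => S1 x /\ f x = y).

Definition powZ (f : R -> R) (n : Z) (x : R) : R :=
  match n with
  | Z0 => x
  | Zpos p => Nat.iter (Pos.to_nat p) f x
  | Zneg p => Nat.iter (Pos.to_nat p) (circ_inv f) x
  end.

Definition conjV (gamma g : R -> R) : R -> R :=
  fun x => circ_inv g (gamma (g x)).

Definition cdist (x y : R) : R := Rmin (Rabs (x - y)) (1 - Rabs (x - y)).

Definition circle_closed (A : R -> Prop) : Prop :=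
  (forall x, A x -> S1 x) /\
  (forall x, S1 x -> (forall eps, eps > 0 -> exists y, A y /\ cdist x y < eps) -> A x).

Definition weakly_wandering (gamma : R -> R) (U : R -> Prop) : Prop :=
  forall n : Z,
    (forall x, U x -> powZ gamma n x = x) \/
    (forall x, U x -> ~ U (powZ gamma n x)).

(* Every element of V is, for some N, affine on each standard dyadic interval of length 2^-N,
   mapping it onto a standard dyadic interval.  Follow such an interval along its orbit as long
   as the iterates stay inside these pieces.  Either some interval stays forever, or each one is
   carried affinely onto another one by a part of itself; as there are finitely many, some
   interval is carried affinely onto itself by a part of itself.  At the first return of such an
   interval the iterate is a contraction, the identity or an expansion, and in each case a
   standard dyadic interval (a half, in the first and last cases) is weakly wandering.  Finally
   some g in V squeezes the complement of a small dyadic neighbourhood of a point outside A into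
   that interval, so A is weakly wandering for the conjugate by g. *)

From Stdlib Require Import Reals Lra Lia ZArith ClassicalEpsilon Classical List Wf_nat.
Open Scope R_scope.

Definition pow2 (z : Z) : R := powerRZ 2 z.

Lemma pow2_pos z : 0 < pow2 z.
Proof. unfold pow2; apply powerRZ_lt; lra. Qed.

Lemma pow2_add a b : pow2 (a + b) = pow2 a * pow2 b.
Proof. unfold pow2; apply powerRZ_add; lra. Qed.

Lemma pow2_1 : pow2 1 = 2.
Proof. unfold pow2; simpl; lra. Qed.

Lemma pow2_m1 : pow2 (-1) = 1/2.
Proof. unfold pow2; simpl; lra. Qed.

Lemma pow2_IZR z : (0 <= z)%Z -> pow2 z = IZR (2 ^ z).
Proof.
  intros Hz. unfold pow2. rewrite <- (Z2Nat.id z Hz), <- pow_powerRZ, pow_IZR.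
  reflexivity.
Qed.

Lemma pow2_lt a b : (a < b)%Z -> pow2 a < pow2 b.
Proof.
  intros Hab. replace b with (a + (b - a))%Z by lia. rewrite pow2_add, (pow2_IZR (b - a)) by lia.
  assert (2 <= 2 ^ (b - a))%Z.
  { replace (b - a)%Z with (Z.succ (b - a - 1)) by lia. rewrite Z.pow_succ_r by lia.
    pose proof (Z.pow_pos_nonneg 2 (b - a - 1)); lia. }
  apply IZR_le in H. pose proof (pow2_pos a). nra.
Qed.

Lemma pow2_le a b : (a <= b)%Z -> pow2 a <= pow2 b.
Proof.
  intros Hab. destruct (Z.eq_dec a b) as [->|]; [lra|]. apply Rlt_le, pow2_lt; lia.
Qed.

Lemma pow2_le_inv a b : pow2 a <= pow2 b -> (a <= b)%Z.
Proof. intros H. destruct (Z_lt_le_dec b a) as [Hba|]; auto. apply pow2_lt in Hba. lra. Qed.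

Lemma pow2_opp_l e : pow2 (- e) * pow2 e = 1.
Proof. rewrite <- pow2_add. replace (- e + e)%Z with 0%Z by lia. reflexivity. Qed.

Lemma pow2_split e e2 : (e2 <= e)%Z -> pow2 e = IZR (2 ^ (e - e2)) * pow2 e2.
Proof. intros. rewrite <- pow2_IZR, <- pow2_add by lia. f_equal; lia. Qed.

Lemma pow2_shift e e' : pow2 (e' - e) * pow2 e = pow2 e'.
Proof. rewrite <- pow2_add. f_equal; lia. Qed.

(** * Standard dyadic intervals *)

Definition dint (e j : Z) (y : R) : Prop := IZR j * pow2 e < y <= (IZR j + 1) * pow2 e.

Definition dint_S1 (e j : Z) : Prop := (0 <= j)%Z /\ (IZR j + 1) * pow2 e <= 1.

Definition dint_sub (e2 j2 e j : Z) : Prop := forall y, dint e2 j2 y -> dint e j y.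

Lemma dint_right e j : dint e j ((IZR j + 1) * pow2 e).
Proof. unfold dint. pose proof (pow2_pos e); split; lra. Qed.

Lemma S1_of_dint e j y : dint_S1 e j -> dint e j y -> S1 y.
Proof.
  unfold dint_S1, dint, S1; intros [H1 H2] [H3 H4]. apply IZR_le in H1.
  pose proof (pow2_pos e). split; nra.
Qed.

Lemma dint_S1_intro e j : (forall y, dint e j y -> S1 y) -> dint_S1 e j.
Proof.
  intros H. destruct (H _ (dint_right e j)) as [H1 H2]. split; auto.
  pose proof (pow2_pos e).
  assert (0 < IZR (j + 1)) by (rewrite plus_IZR; nra). apply lt_IZR in H3. lia.
Qed.

Lemma dint_S1_range N w : (0 <= N)%Z -> dint_S1 (- N) w <-> (0 <= w < 2 ^ N)%Z.
Proof.
  intros HN. unfold dint_S1. pose proof (pow2_opp_l N) as HP. pose proof (pow2_pos (- N)).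
  rewrite (pow2_IZR N HN) in HP. split.
  - intros [H1 H2]. split; auto. apply lt_IZR.
    assert (IZR w + 1 <= IZR (2 ^ N)).
    { apply (Rmult_le_reg_r (pow2 (- N))); auto. lra. }
    rewrite <- plus_IZR in H0. apply le_IZR in H0. apply IZR_lt. lia.
  - intros [H1 H2]. split; auto. assert (w + 1 <= 2 ^ N)%Z as H3 by lia. apply IZR_le in H3.
    rewrite plus_IZR in H3. simpl in H3. nra.
Qed.

Lemma dint_S1_level e j : dint_S1 e j -> (e <= 0)%Z.
Proof.
  intros [H1 H2]. apply pow2_le_inv. apply IZR_le in H1. pose proof (pow2_pos e).
  unfold pow2 at 2; simpl. nra.
Qed.

Lemma dint_meet_bounds e j e2 j2 : (e2 <= e)%Z ->
  (exists y, dint e j y /\ dint e2 j2 y) ->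
  (j * 2 ^ (e - e2) <= j2 /\ j2 + 1 <= (j + 1) * 2 ^ (e - e2))%Z.
Proof.
  intros He [y [[H1 H2] [H3 H4]]]. rewrite (pow2_split e e2 He) in H1, H2.
  set (M := (2 ^ (e - e2))%Z) in *. pose proof (pow2_pos e2).
  split.
  - assert (j * M < j2 + 1)%Z; [|lia]. apply lt_IZR.
    rewrite mult_IZR, plus_IZR. apply (Rmult_lt_reg_r (pow2 e2)); auto. simpl. nra.
  - assert (j2 < (j + 1) * M)%Z; [|lia]. apply lt_IZR.
    rewrite mult_IZR, plus_IZR. apply (Rmult_lt_reg_r (pow2 e2)); auto. simpl. nra.
Qed.

Lemma dint_sub_of_bounds e j e2 j2 : (e2 <= e)%Z ->
  (j * 2 ^ (e - e2) <= j2 /\ j2 + 1 <= (j + 1) * 2 ^ (e - e2))%Z -> dint_sub e2 j2 e j.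
Proof.
  intros He [H1 H2] y [H3 H4]. unfold dint. rewrite (pow2_split e e2 He).
  set (M := (2 ^ (e - e2))%Z) in *. pose proof (pow2_pos e2).
  apply IZR_le in H1, H2. rewrite mult_IZR in H1, H2. rewrite !plus_IZR in H2. simpl in H2.
  split; nra.
Qed.

Lemma dint_sub_of_meet e j e2 j2 : (e2 <= e)%Z ->
  (exists y, dint e j y /\ dint e2 j2 y) -> dint_sub e2 j2 e j.
Proof. intros. apply dint_sub_of_bounds, dint_meet_bounds; auto. Qed.

Lemma dint_meet_same_level e j j2 : (exists y, dint e j y /\ dint e j2 y) -> j = j2.
Proof.
  intros H. pose proof (dint_meet_bounds e j e j2 (Z.le_refl _) H) as Hb.
  rewrite Z.sub_diag in Hb. simpl in Hb. lia.
Qed.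

Lemma dint_sub_level e2 j2 e j : dint_sub e2 j2 e j -> (e2 <= e)%Z.
Proof.
  intros HS. apply Z.nlt_ge. intros Hlt.
  pose proof (pow2_pos e2) as Hp.
  assert (Hmid : dint e j ((IZR j2 + /2) * pow2 e2)) by (apply HS; unfold dint; split; nra).
  pose proof (HS _ (dint_right e2 j2)) as Hright.
  assert (Hhalf : pow2 e <= pow2 e2 * /2).
  { replace (/2) with (1/2) by lra. rewrite <- pow2_m1, <- pow2_add. apply pow2_le. lia. }
  destruct Hmid, Hright. nra.
Qed.

Lemma dint_sub_bounds e2 j2 e j : dint_sub e2 j2 e j ->
  (e2 <= e)%Z /\ (j * 2 ^ (e - e2) <= j2 /\ j2 + 1 <= (j + 1) * 2 ^ (e - e2))%Z.
Proof.
  intros HS. pose proof (dint_sub_level _ _ _ _ HS) as He. split; auto.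
  apply dint_meet_bounds; auto. exists ((IZR j2 + 1) * pow2 e2).
  split; [apply HS|]; apply dint_right.
Qed.

Lemma dint_sub_S1 e2 j2 e j : dint_sub e2 j2 e j -> dint_S1 e j -> dint_S1 e2 j2.
Proof. intros. apply dint_S1_intro. intros. eapply S1_of_dint; eauto. Qed.

Lemma dint_half_sub e j b : (b = 0 \/ b = 1)%Z -> dint_sub (e - 1) (2 * j + b) e j.
Proof.
  intros Hb. apply dint_sub_of_bounds; [lia|].
  replace (e - (e - 1))%Z with 1%Z by lia. rewrite Z.pow_1_r. lia.
Qed.

Lemma dint_half_avoiding e j e' j' : (e' < e)%Z ->
  exists b, (b = 0 \/ b = 1)%Z /\ forall y, dint (e - 1) (2 * j + b) y -> ~ dint e' j' y.
Proof.
  intros He. destruct (classic (exists y, dint (e - 1) (2 * j) y /\ dint e' j' y)) as [Hy|Hn].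
  - exists 1%Z. split; auto. intros y H1 H2.
    pose proof (dint_sub_of_meet (e - 1) (2 * j) e' j' ltac:(lia) Hy y H2) as [H3 H4].
    destruct H1. rewrite plus_IZR, mult_IZR in *. simpl in *. lra.
  - exists 0%Z. split; auto. intros y H1 H2. apply Hn. rewrite Z.add_0_r in H1. eauto.
Qed.

Lemma dint_containing e x : (e <= 0)%Z -> S1 x -> exists h, dint e h x /\ dint_S1 e h.
Proof.
  intros He [Hx1 Hx2]. pose proof (pow2_opp_l e) as Hopp. pose proof (pow2_pos e).
  pose proof (pow2_pos (- e)).
  set (z := x * pow2 (- e)).
  destruct (archimed (- z)) as [A1 A2]. set (h := (- up (- z))%Z).
  assert (Hh : IZR h < z <= IZR h + 1) by (unfold h; rewrite opp_IZR; lra).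
  exists h. split; [|split].
  - assert (E : forall a, a * pow2 e * pow2 (- e) = a)
      by (intros; rewrite Rmult_assoc, (Rmult_comm (pow2 e)), Hopp; ring).
    unfold dint, z in *. split.
    + apply (Rmult_lt_reg_r (pow2 (- e))); auto. rewrite E. lra.
    + apply (Rmult_le_reg_r (pow2 (- e))); auto. rewrite E. lra.
  - assert (0 < z) by (apply Rmult_lt_0_compat; auto).
    assert (- 1 < h)%Z; [apply lt_IZR; simpl; lra | lia].
  - assert (Hlt : (h < 2 ^ (- e))%Z).
    { apply lt_IZR. rewrite <- pow2_IZR by lia. unfold z in Hh. nra. }
    assert (Hle : IZR h + 1 <= pow2 (- e)).
    { rewrite pow2_IZR, <- plus_IZR by lia. apply IZR_le. lia. }
    nra.
Qed.

Lemma dint_sub_containing e j e0 : dint_S1 e j -> (e <= e0)%Z -> (e0 <= 0)%Z ->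
  exists h, dint_sub e j e0 h /\ dint_S1 e0 h.
Proof.
  intros Hs He He0.
  destruct (dint_containing e0 ((IZR j + 1) * pow2 e) He0) as [h [Hh1 Hh2]].
  { eapply S1_of_dint; eauto. apply dint_right. }
  exists h. split; auto. apply dint_sub_of_meet; auto. eexists; split; eauto. apply dint_right.
Qed.

Definition maps_affinely (f : R -> R) (i : nat) (e j e' j' : Z) : Prop :=
  forall x, dint e j x -> Nat.iter i f x = pow2 (e' - e) * x + (IZR j' - IZR j) * pow2 e'.

Lemma maps_affinely_into f i e j e' j' x :
  maps_affinely f i e j e' j' -> dint e j x -> dint e' j' (Nat.iter i f x).
Proof.
  intros HM Hx. rewrite (HM x Hx). destruct Hx as [H1 H2]. pose proof (pow2_shift e e').
  pose proof (pow2_pos (e' - e)). unfold dint. split.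
  - apply (Rmult_lt_compat_l (pow2 (e' - e))) in H1; auto. nra.
  - apply (Rmult_le_compat_l (pow2 (e' - e))) in H2; [|lra]. nra.
Qed.

Lemma maps_affinely_onto f i e j e' j' y : maps_affinely f i e j e' j' -> dint e' j' y ->
  exists x, dint e j x /\ Nat.iter i f x = y.
Proof.
  intros HM [H1 H2]. pose proof (pow2_shift e e'). pose proof (pow2_pos (e' - e)).
  set (x := (y - (IZR j' - IZR j) * pow2 e') / pow2 (e' - e)).
  assert (Hx : pow2 (e' - e) * x = y - (IZR j' - IZR j) * pow2 e') by (unfold x; field; lra).
  assert (dint e j x).
  { unfold dint. pose proof (pow2_pos e). split.
    - apply (Rmult_lt_reg_l (pow2 (e' - e))); auto. nra.
    - apply (Rmult_le_reg_l (pow2 (e' - e))); auto. nra. }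
  exists x. split; auto. rewrite (HM x H3). lra.
Qed.

Lemma maps_affinely_0 f e j : maps_affinely f 0 e j e j.
Proof. intros x _. simpl. rewrite Z.sub_diag. unfold pow2; simpl. lra. Qed.

Lemma maps_affinely_comp f i i' e j e1 j1 e2 j2 :
  maps_affinely f i e j e1 j1 -> maps_affinely f i' e1 j1 e2 j2 ->
  maps_affinely f (i' + i) e j e2 j2.
Proof.
  intros H1 H2 x Hx. rewrite Nat.iter_add, (H2 _ (maps_affinely_into _ _ _ _ _ _ _ H1 Hx)).
  rewrite (H1 x Hx).
  replace (e2 - e)%Z with ((e2 - e1) + (e1 - e))%Z by lia. rewrite pow2_add.
  rewrite <- (pow2_shift e1 e2). ring.
Qed.

Lemma maps_affinely_restrict f i e j e' j' e2 j2 :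
  maps_affinely f i e j e' j' -> dint_sub e2 j2 e j ->
  maps_affinely f i e2 j2 (e2 + (e' - e)) (j2 + (j' - j) * 2 ^ (e - e2)).
Proof.
  intros HM HS. pose proof (dint_sub_level _ _ _ _ HS) as He.
  intros x Hx; rewrite (HM x (HS x Hx)).
  replace (e2 + (e' - e) - e2)%Z with (e' - e)%Z by lia.
  rewrite plus_IZR, mult_IZR, <- pow2_IZR by lia.
  replace (IZR j2 + IZR (j' - j) * pow2 (e - e2) - IZR j2)
    with (IZR (j' - j) * pow2 (e - e2)) by ring.
  rewrite Rmult_assoc, <- pow2_add. replace (e - e2 + (e2 + (e' - e)))%Z with e' by lia.
  rewrite minus_IZR. ring.
Qed.

Lemma maps_affinely_pullback f i e j e' j' e2' j2' :
  maps_affinely f i e j e' j' -> dint_sub e2' j2' e' j' ->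
  exists e2 j2, dint_sub e2 j2 e j /\ maps_affinely f i e2 j2 e2' j2'.
Proof.
  intros HM HS. destruct (dint_sub_bounds _ _ _ _ HS) as [He [H1 H2]].
  set (M := (2 ^ (e' - e2'))%Z) in *.
  exists (e + (e2' - e'))%Z, (j2' - (j' - j) * M)%Z.
  assert (HS2 : dint_sub (e + (e2' - e')) (j2' - (j' - j) * M) e j).
  { apply dint_sub_of_bounds; [lia|].
    replace (e - (e + (e2' - e')))%Z with (e' - e2')%Z by lia. fold M. lia. }
  split; auto.
  pose proof (maps_affinely_restrict _ _ _ _ _ _ _ _ HM HS2) as HM2.
  replace (e + (e2' - e') + (e' - e))%Z with e2' in HM2 by lia.
  replace (e - (e + (e2' - e')))%Z with (e' - e2')%Z in HM2 by lia. fold M in HM2.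
  replace (j2' - (j' - j) * M + (j' - j) * M)%Z with j2' in HM2 by lia. exact HM2.
Qed.

(** * Bijections of the circle and conjugation *)

Definition maps_S1 (f : R -> R) : Prop := forall x, S1 x -> S1 (f x).
Definition inj_S1 (f : R -> R) : Prop := forall x y, S1 x -> S1 y -> f x = f y -> x = y.
Definition surj_S1 (f : R -> R) : Prop := forall y, S1 y -> exists x, S1 x /\ f x = y.
Definition bij_S1 (f : R -> R) : Prop := maps_S1 f /\ inj_S1 f /\ surj_S1 f.

Lemma bij_S1_of_in_V f : in_V f -> bij_S1 f.
Proof. intros (Hm & Hi & Hs & _). split; auto. Qed.

Lemma iter_S1 f n x : maps_S1 f -> S1 x -> S1 (Nat.iter n f x).
Proof. intros Hf Hx. induction n; simpl; auto. Qed.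

Lemma iter_ext_S1 f1 f2 n x : maps_S1 f1 -> (forall y, S1 y -> f1 y = f2 y) -> S1 x ->
  Nat.iter n f1 x = Nat.iter n f2 x.
Proof.
  intros Hm E Hx. induction n; simpl; auto. rewrite <- IHn. apply E, iter_S1; auto.
Qed.

Section CircleInverse.

Variable f : R -> R.
Hypothesis Hf : bij_S1 f.

Lemma circ_inv_spec y : S1 y -> S1 (circ_inv f y) /\ f (circ_inv f y) = y.
Proof. intros Hy. unfold circ_inv. apply epsilon_spec. apply Hf; auto. Qed.

Lemma circ_inv_S1 : maps_S1 (circ_inv f).
Proof. intros y Hy. apply circ_inv_spec; auto. Qed.

Lemma circ_inv_r y : S1 y -> f (circ_inv f y) = y.
Proof. apply circ_inv_spec. Qed.

Lemma circ_inv_l x : S1 x -> circ_inv f (f x) = x.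
Proof.
  intros Hx. destruct Hf as (Hm & Hi & _).
  apply Hi; auto; [apply circ_inv_S1|]; auto. apply circ_inv_r; auto.
Qed.

Lemma iter_circ_inv_l n x : S1 x -> Nat.iter n (circ_inv f) (Nat.iter n f x) = x.
Proof.
  revert x. induction n; intros x Hx; auto.
  rewrite Nat.iter_succ_r, Nat.iter_succ, circ_inv_l; auto. apply iter_S1; auto. apply Hf.
Qed.

Lemma iter_circ_inv_r n y : S1 y -> Nat.iter n f (Nat.iter n (circ_inv f) y) = y.
Proof.
  revert y. induction n; intros y Hy; auto.
  rewrite Nat.iter_succ_r, Nat.iter_succ, circ_inv_r; auto.
  apply iter_S1; auto. apply circ_inv_S1.
Qed.

Lemma iter_inj_S1 n x y : S1 x -> S1 y -> Nat.iter n f x = Nat.iter n f y -> x = y.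
Proof.
  intros Hx Hy E. rewrite <- (iter_circ_inv_l n x), <- (iter_circ_inv_l n y), E; auto.
Qed.

End CircleInverse.

Ltac solve_S1 :=
  repeat first
    [ assumption
    | match goal with
      | H : bij_S1 ?f |- S1 (circ_inv ?f _) => apply (circ_inv_S1 f H)
      | H : bij_S1 ?f |- maps_S1 (circ_inv ?f) => apply (circ_inv_S1 f H)
      | H : bij_S1 ?f |- S1 (?f _) => apply (proj1 H)
      | H : bij_S1 ?f |- maps_S1 ?f => apply (proj1 H)
      | |- S1 (Nat.iter _ _ _) => apply iter_S1
      end ].

Lemma powZ_S1 f n x : bij_S1 f -> S1 x -> S1 (powZ f n x).
Proof. intros Hf Hx. destruct n; simpl; solve_S1. Qed.

Lemma bij_S1_conjV gamma g : bij_S1 gamma -> bij_S1 g -> bij_S1 (conjV gamma g).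
Proof.
  intros Hgam Hg. unfold conjV. split; [|split].
  - intros x Hx. solve_S1.
  - intros x y Hx Hy E. apply (proj1 (proj2 Hg)), (proj1 (proj2 Hgam)); solve_S1.
    rewrite <- (circ_inv_r g Hg (gamma (g x))), E, circ_inv_r by solve_S1. reflexivity.
  - intros y Hy. exists (circ_inv g (circ_inv gamma (g y))). split; [solve_S1|].
    rewrite circ_inv_r, circ_inv_r, circ_inv_l by solve_S1. reflexivity.
Qed.

Lemma circ_inv_conjV gamma g y : bij_S1 gamma -> bij_S1 g -> S1 y ->
  circ_inv (conjV gamma g) y = conjV (circ_inv gamma) g y.
Proof.
  intros Hgam Hg Hy. unfold conjV at 2.
  assert (E : conjV gamma g (circ_inv g (circ_inv gamma (g y))) = y).
  { unfold conjV. rewrite circ_inv_r, circ_inv_r, circ_inv_l by solve_S1. reflexivity. }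
  rewrite <- E at 1. apply circ_inv_l; [apply bij_S1_conjV; auto | solve_S1].
Qed.

Lemma iter_conjV h g n x : maps_S1 h -> bij_S1 g -> S1 x ->
  Nat.iter n (conjV h g) x = circ_inv g (Nat.iter n h (g x)).
Proof.
  intros Hh Hg Hx. induction n; simpl.
  - rewrite circ_inv_l by solve_S1. reflexivity.
  - rewrite IHn. unfold conjV. rewrite circ_inv_r by solve_S1. reflexivity.
Qed.

Lemma powZ_conjV gamma g n x : bij_S1 gamma -> bij_S1 g -> S1 x ->
  powZ (conjV gamma g) n x = circ_inv g (powZ gamma n (g x)).
Proof.
  intros Hgam Hg Hx. destruct n as [|p|p]; simpl.
  - rewrite circ_inv_l by solve_S1. reflexivity.
  - apply iter_conjV; solve_S1.
  - pose proof (bij_S1_conjV gamma g Hgam Hg).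
    rewrite (iter_ext_S1 _ (conjV (circ_inv gamma) g)); [apply iter_conjV| | |]; solve_S1.
    intros y Hy. apply circ_inv_conjV; auto.
Qed.

Definition forward_wandering (f : R -> R) (U : R -> Prop) : Prop :=
  forall n, (1 <= n)%nat ->
    (forall x, U x -> Nat.iter n f x = x) \/ (forall x, U x -> ~ U (Nat.iter n f x)).

Lemma weakly_wandering_of_forward f U : bij_S1 f -> (forall x, U x -> S1 x) ->
  forward_wandering f U -> weakly_wandering f U.
Proof.
  intros Hf HU HW [|p|p]; simpl.
  - left; auto.
  - apply HW; lia.
  - destruct (HW (Pos.to_nat p) ltac:(lia)) as [Hfix|Hdis]; [left|right].
    + intros x Hx. rewrite <- (Hfix x Hx) at 1. apply iter_circ_inv_l; auto.
    + intros x Hx Hy. apply (Hdis _ Hy). rewrite iter_circ_inv_r; auto.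
Qed.

Lemma weakly_wandering_conjV gamma g U A : bij_S1 gamma -> bij_S1 g ->
  (forall x, A x -> S1 x) -> (forall x, A x -> U (g x)) ->
  weakly_wandering gamma U -> weakly_wandering (conjV gamma g) A.
Proof.
  intros Hgam Hg HA HAU HW n.
  assert (Hpow : forall x, A x -> powZ (conjV gamma g) n x = circ_inv g (powZ gamma n (g x)))
    by (intros; apply powZ_conjV; auto).
  destruct (HW n) as [Hfix|Hdis]; [left|right].
  - intros x Hx. rewrite Hpow, Hfix by auto. apply circ_inv_l; auto.
  - intros x Hx HAx. pose proof (HA x Hx). apply (Hdis (g x)); auto.
    rewrite Hpow in HAx by auto. apply HAU in HAx.
    rewrite (circ_inv_r g Hg) in HAx by (apply powZ_S1; solve_S1). exact HAx.
Qed.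

(** * Elements of V at a fixed level *)

(* [f] maps every standard dyadic interval of length [2^-N] in S^1 affinely, with slope a power
   of 2, onto a standard dyadic interval. *)
Definition affine_at_level (f : R -> R) (N : Z) : Prop :=
  forall j0, dint_S1 (- N) j0 -> exists k C, forall x, dint (- N) j0 x ->
    f x = pow2 k * x + IZR C * pow2 (k - N).

Definition V_at (f : R -> R) (N : Z) : Prop := bij_S1 f /\ (0 <= N)%Z /\ affine_at_level f N.

Lemma maps_affinely_S1 f i e j e' j' : maps_S1 f -> maps_affinely f i e j e' j' ->
  dint_S1 e j -> dint_S1 e' j'.
Proof.
  intros Hf HM Hs. apply dint_S1_intro. intros y Hy.
  destruct (maps_affinely_onto _ _ _ _ _ _ _ HM Hy) as [x [Hx <-]].
  apply iter_S1; auto. eapply S1_of_dint; eauto.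
Qed.

Lemma maps_affinely_of_piece f N j0 k C e j :
  (forall x, dint (- N) j0 x -> f x = pow2 k * x + IZR C * pow2 (k - N)) ->
  dint_sub e j (- N) j0 -> maps_affinely f 1 e j (e + k) (j + C * 2 ^ (- N - e)).
Proof.
  intros HF HS. pose proof (dint_sub_level _ _ _ _ HS) as He. intros x Hx. simpl.
  rewrite HF by auto.
  replace (e + k - e)%Z with k by lia. rewrite plus_IZR, mult_IZR, <- pow2_IZR by lia.
  replace (IZR j + IZR C * pow2 (- N - e) - IZR j) with (IZR C * pow2 (- N - e)) by ring.
  rewrite Rmult_assoc, <- pow2_add. replace (- N - e + (e + k))%Z with (k - N)%Z by lia. ring.
Qed.

Lemma V_at_ext f g N : (forall x, f x = g x) -> V_at f N -> V_at g N.
Proof.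
  intros E [(Hm & Hi & Hs) [HN HL]]. split; [split; [|split]|split]; auto.
  - intros x Hx; rewrite <- E; auto.
  - intros x y Hx Hy; rewrite <- !E; auto.
  - intros y Hy; destruct (Hs y Hy) as [x [Hx Hx']]; exists x; rewrite <- E; auto.
  - intros j0 Hj0; destruct (HL j0 Hj0) as [k [C HC]]; exists k, C; intros; rewrite <- E; auto.
Qed.

Lemma V_at_id : V_at (fun x => x) 0.
Proof.
  split; [split; [|split]|split].
  - intros x Hx; auto.
  - intros x y _ _ E; auto.
  - intros y Hy; exists y; auto.
  - lia.
  - intros j0 _. exists 0%Z, 0%Z. intros x _. unfold pow2; simpl. lra.
Qed.

Lemma bij_S1_comp f g : bij_S1 f -> bij_S1 g -> bij_S1 (fun x => f (g x)).
Proof.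
  intros (Hmf & Hif & Hsf) (Hmg & Hig & Hsg). split; [|split].
  - intros x Hx; auto.
  - intros x y Hx Hy E; auto.
  - intros y Hy. destruct (Hsf y Hy) as [z [Hz <-]]. destruct (Hsg z Hz) as [x [Hx <-]]. eauto.
Qed.

Lemma V_at_comp f g Nf Ng : V_at f Nf -> V_at g Ng -> V_at (fun x => f (g x)) (Nf + Ng).
Proof.
  intros [Hf [HNf HLf]] [Hg [HNg HLg]]. split; [apply bij_S1_comp; auto|]. split; [lia|].
  intros j0 Hj0. set (N := (Nf + Ng)%Z) in *.
  destruct (dint_sub_containing (- N) j0 (- Ng) Hj0 ltac:(lia) ltac:(lia)) as [j1 [HS1 Hj1]].
  destruct (HLg j1 Hj1) as [k [C HC]].
  assert (Hk : (- Ng + k <= 0)%Z).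
  { eapply dint_S1_level, maps_affinely_S1; [apply Hg| |exact Hj1].
    apply (maps_affinely_of_piece _ _ _ _ _ _ _ HC). intros y Hy; exact Hy. }
  pose proof (maps_affinely_of_piece g Ng j1 k C (- N) j0 HC HS1) as HM.
  set (jj := (j0 + C * 2 ^ (- Ng - - N))%Z) in *.
  pose proof (maps_affinely_S1 _ _ _ _ _ _ (proj1 Hg) HM Hj0) as Hjj.
  destruct (dint_sub_containing (- N + k) jj (- Nf) Hjj ltac:(lia) ltac:(lia)) as [j2 [HS2 Hj2]].
  destruct (HLf j2 Hj2) as [k' [C' HC']].
  exists (k + k')%Z, (C * 2 ^ Nf + C' * 2 ^ (Ng - k))%Z. intros x Hx.
  pose proof (maps_affinely_into _ _ _ _ _ _ _ HM Hx) as Hgx. simpl in Hgx.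
  rewrite (HC' _ (HS2 _ Hgx)), (HC x (HS1 x Hx)).
  rewrite plus_IZR, !mult_IZR, <- !pow2_IZR by lia.
  assert (E1 : pow2 k' * pow2 k = pow2 (k + k')) by (rewrite <- pow2_add; f_equal; lia).
  assert (E2 : pow2 k' * pow2 (k - Ng) = pow2 Nf * pow2 (k + k' - N))
    by (rewrite <- !pow2_add; f_equal; unfold N; lia).
  assert (E3 : pow2 (k' - Nf) = pow2 (Ng - k) * pow2 (k + k' - N))
    by (rewrite <- !pow2_add; f_equal; unfold N; lia).
  rewrite E3, Rmult_plus_distr_l, <- Rmult_assoc, E1, <- Rmult_assoc,
    (Rmult_comm (pow2 k') (IZR C)), Rmult_assoc, E2. ring.
Qed.

Lemma V_at_iter f N n : V_at f N -> exists N', V_at (Nat.iter n f) N'.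
Proof.
  intros Hf. induction n as [|n [N' HN']].
  - exists 0%Z. apply (V_at_ext (fun x => x)); auto. apply V_at_id.
  - exists (N + N')%Z. apply (V_at_ext (fun x => f (Nat.iter n f x))); auto.
    apply V_at_comp; auto.
Qed.

Definition dyadic_at (x : R) (e : Z) : Prop := exists M, x = IZR M * pow2 e.

Lemma dyadic_at_mono x e e' : dyadic_at x e -> (e' <= e)%Z -> dyadic_at x e'.
Proof.
  intros [M ->] He. exists (M * 2 ^ (e - e'))%Z. rewrite mult_IZR, <- pow2_IZR by lia.
  rewrite Rmult_assoc, <- pow2_add. do 2 f_equal. lia.
Qed.

Lemma dyadic_at_of_dyadic x : dyadic x -> exists e, dyadic_at x e.
Proof.
  intros [m [k ->]]. exists (- Z.of_nat k)%Z, m. unfold Rdiv, pow2. f_equal.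
  rewrite pow_powerRZ, powerRZ_neg'. reflexivity.
Qed.

Lemma dyadic_of_dyadic_at x e : dyadic_at x e -> dyadic x.
Proof.
  intros [M ->]. destruct (Z_le_gt_dec 0 e).
  - exists (M * 2 ^ e)%Z, 0%nat. rewrite mult_IZR, <- pow2_IZR by lia. simpl. lra.
  - exists M, (Z.to_nat (- e)). unfold Rdiv, pow2. f_equal.
    rewrite pow_powerRZ, Z2Nat.id, powerRZ_neg', Rinv_inv by lia. reflexivity.
Qed.

Lemma in_V_of_V_at f N : V_at f N -> in_V f.
Proof.
  intros [(Hm & Hi & Hs) [HN HL]]. do 3 (split; auto). split.
  - intros x Hx Hd. destruct (dint_containing (- N) x ltac:(lia) Hx) as [j0 [Hx0 Hj0]].
    destruct (HL j0 Hj0) as [k [C HC]]. rewrite (HC x Hx0).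
    destruct (dyadic_at_of_dyadic x Hd) as [e [M HM]].
    apply (dyadic_of_dyadic_at _ (Z.min (k + e) (k - N))).
    destruct (dyadic_at_mono (pow2 k * x) (k + e) (Z.min (k + e) (k - N))) as [M1 E1].
    { exists M. rewrite HM, pow2_add. ring. } { lia. }
    destruct (dyadic_at_mono (IZR C * pow2 (k - N)) (k - N) (Z.min (k + e) (k - N))) as [M2 E2].
    { exists C. reflexivity. } { lia. }
    exists (M1 + M2)%Z. rewrite E1, E2, plus_IZR. ring.
  - (* the subdivision into the [2^N] intervals of length [2^-N] *)
    exists (Z.to_nat (2 ^ N)), (fun i => INR i * pow2 (- N)).
    pose proof (Z.pow_pos_nonneg 2 N ltac:(lia) HN).
    pose proof (pow2_opp_l N). pose proof (pow2_pos (- N)).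
    split; [simpl; lra|]. split.
    { rewrite INR_IZR_INZ, Z2Nat.id, <- pow2_IZR by lia. lra. }
    split. { intros i _. rewrite S_INR. lra. }
    split.
    { intros i _. apply (dyadic_of_dyadic_at _ (- N)). exists (Z.of_nat i).
      rewrite INR_IZR_INZ; reflexivity. }
    intros i Hi0. assert (Hin : dint_S1 (- N) (Z.of_nat i)) by (apply dint_S1_range; lia).
    destruct (HL _ Hin) as [k [C HC]]. exists k, (IZR C * pow2 (k - N)). intros x Hx.
    apply HC. unfold dint. rewrite S_INR, INR_IZR_INZ in Hx. lra.
Qed.

Lemma exists_common_level (Q : Z -> nat -> Prop) n :
  (forall N N' i, (N <= N')%Z -> Q N i -> Q N' i) ->
  (forall i, (i < n)%nat -> exists N, Q N i) ->
  exists N, (0 <= N)%Z /\ forall i, (i < n)%nat -> Q N i.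
Proof.
  intros Hm. induction n; intros H.
  - exists 0%Z. split; [lia|]. intros; lia.
  - destruct IHn as [N1 [HN1 H1]]. { intros; apply H; lia. }
    destruct (H n ltac:(lia)) as [N2 H2].
    exists (Z.max N1 N2). split; [lia|]. intros i Hi. destruct (Nat.eq_dec i n) as [->|].
    + apply (Hm N2); auto; lia.
    + apply (Hm N1); [lia| apply H1; lia].
Qed.

Definition piece_at_level (f : R -> R) (a b : R) (N : Z) : Prop :=
  dyadic_at a (- N) /\ dyadic_at b (- N) /\
  exists k C, forall x, a < x <= b -> f x = pow2 k * x + IZR C * pow2 (k - N).

Lemma piece_at_level_mono f a b N N' : (N <= N')%Z -> piece_at_level f a b N ->
  piece_at_level f a b N'.
Proof.
  intros HNN [Ha [Hb [k [C HC]]]].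
  split; [eapply dyadic_at_mono; eauto; lia|]. split; [eapply dyadic_at_mono; eauto; lia|].
  exists k, (C * 2 ^ (N' - N))%Z. intros x Hx.
  rewrite HC, mult_IZR, <- pow2_IZR, Rmult_assoc, <- pow2_add by (auto; lia).
  do 3 f_equal. lia.
Qed.

Lemma exists_piece_level f a b k c : dyadic a -> dyadic b -> dyadic (f b) -> a < b ->
  (forall x, a < x <= b -> f x = pow2 k * x + c) -> exists N, piece_at_level f a b N.
Proof.
  intros Ha Hb Hfb Hab Hf.
  destruct (dyadic_at_of_dyadic _ Ha) as [e1 He1].
  destruct (dyadic_at_of_dyadic _ Hb) as [e2 He2].
  destruct (dyadic_at_of_dyadic _ Hfb) as [e3 He3].
  assert (Hc : c = f b - pow2 k * b) by (rewrite Hf; [ring | lra]).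
  set (e := Z.min e3 (e2 + k)).
  assert (Hce : dyadic_at c e).
  { destruct (dyadic_at_mono _ _ e He3 ltac:(lia)) as [M3 E3].
    destruct (dyadic_at_mono _ _ (e - k) He2 ltac:(lia)) as [M2 E2].
    exists (M3 - M2)%Z. rewrite Hc, E3, E2, minus_IZR.
    replace (pow2 e) with (pow2 k * pow2 (e - k)) by (rewrite <- pow2_add; f_equal; lia).
    ring. }
  set (N := Z.max 0 (Z.max (- e1) (Z.max (- e2) (k - e)))).
  exists N. split; [eapply dyadic_at_mono; eauto; lia|].
  split; [eapply dyadic_at_mono; eauto; lia|].
  destruct (dyadic_at_mono _ _ (k - N) Hce ltac:(lia)) as [C HC].
  exists k, C. intros x Hx. rewrite Hf, HC by auto. reflexivity.
Qed.

Lemma subdivision_piece (a : nat -> R) n x : a 0%nat = 0 -> 0 < x <= a n ->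
  exists i, (i < n)%nat /\ a i < x <= a (S i).
Proof.
  intros H0 [Hx Hxn]. induction n as [|m IH].
  - lra.
  - destruct (Rle_lt_dec x (a m)) as [Hle|Hlt].
    + destruct (IH Hle) as [i [Hi Hi']]. exists i. split; auto.
    + exists m. split; auto.
Qed.

Lemma subdivision_S1 (a : nat -> R) n : a 0%nat = 0 -> a n = 1 ->
  (forall i, (i < n)%nat -> a i < a (S i)) -> forall i, (0 < i <= n)%nat -> S1 (a i).
Proof.
  intros H0 Hn Hinc.
  assert (Hmono : forall i j, (i <= j <= n)%nat -> a i <= a j).
  { intros i j Hij. induction j.
    - replace i with 0%nat by lia. lra.
    - destruct (Nat.eq_dec i (S j)) as [->|]; [lra|].
      specialize (IHj ltac:(lia)). specialize (Hinc j ltac:(lia)). lra. }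
  intros [|i] Hi; [lia|]. split.
  - pose proof (Hmono 0%nat i ltac:(lia)). pose proof (Hinc i ltac:(lia)). lra.
  - rewrite <- Hn. apply Hmono. lia.
Qed.

Lemma V_at_of_in_V f : in_V f -> exists N, V_at f N.
Proof.
  intros [Hm [Hinj [Hs [Hd [n [a [Ha0 [Han [Hinc [Hda Hpc]]]]]]]]]].
  destruct (exists_common_level (fun N i => piece_at_level f (a i) (a (S i)) N) n)
    as [N [HN HQ]].
  - intros N N' i. apply piece_at_level_mono.
  - intros i Hi. destruct (Hpc i Hi) as [k [c Hc]].
    apply (exists_piece_level f _ _ k c); [apply Hda; lia | apply Hda; lia | | auto | exact Hc].
    apply Hd; [apply (subdivision_S1 a n); auto; lia | apply Hda; lia].
  - exists N. split; [split; auto|split; auto].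
    intros j0 Hj0. set (xr := (IZR j0 + 1) * pow2 (- N)).
    assert (Hxr : S1 xr) by (eapply S1_of_dint; eauto; apply dint_right).
    destruct (subdivision_piece a n xr Ha0 ltac:(rewrite Han; apply Hxr)) as [i [Hi Hxi]].
    destruct (HQ i Hi) as [[A HA] [_ [k [C HC]]]].
    exists k, C. intros x Hx. apply HC.
    assert (HAj : (A <= j0)%Z).
    { assert (A < j0 + 1)%Z; [|lia]. apply lt_IZR. rewrite plus_IZR.
      apply (Rmult_lt_reg_r (pow2 (- N))); [apply pow2_pos|]. unfold xr in Hxi. lra. }
    destruct Hx as [Hx1 Hx2]. apply IZR_le in HAj. pose proof (pow2_pos (- N)).
    split; [|unfold xr in Hxi; lra]. rewrite HA. nra.
Qed.

(** * Squeezing the circle into a dyadic interval *)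

Definition rotation (r x : R) : R := if Rle_dec x (1 - r) then x + r else x + r - 1.

Lemma V_at_rotation M R0 : (0 <= M)%Z -> (0 <= R0 < 2 ^ M)%Z ->
  V_at (rotation (IZR R0 * pow2 (- M))) M.
Proof.
  intros HM HR. set (r := IZR R0 * pow2 (- M)).
  pose proof (pow2_opp_l M) as Hopp. pose proof (pow2_pos (- M)).
  rewrite (pow2_IZR M HM) in Hopp.
  assert (Hr0 : 0 <= r) by (unfold r; assert (0 <= R0)%Z as HR0 by lia; apply IZR_le in HR0; nra).
  assert (Hr1 : r + pow2 (- M) <= 1).
  { unfold r. assert (R0 + 1 <= 2 ^ M)%Z as H1 by lia. apply IZR_le in H1.
    rewrite plus_IZR in H1. simpl in H1. nra. }
  unfold rotation. split; [split; [|split]|split; auto].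
  - intros x [Hx1 Hx2]. destruct (Rle_dec x (1 - r)); split; lra.
  - intros x y [Hx1 Hx2] [Hy1 Hy2]. destruct (Rle_dec x (1 - r)), (Rle_dec y (1 - r)); lra.
  - intros y [Hy1 Hy2]. destruct (Rle_dec y r).
    + exists (y + 1 - r). split; [split; lra|]. destruct (Rle_dec (y + 1 - r) (1 - r)); lra.
    + exists (y - r). split; [split; lra|]. destruct (Rle_dec (y - r) (1 - r)); lra.
  - intros j0 Hj0. apply dint_S1_range in Hj0; auto.
    destruct (Z_le_gt_dec (j0 + 1) (2 ^ M - R0)) as [Hlow|Hhigh].
    + exists 0%Z, R0. intros x [Hx1 Hx2].
      change (pow2 0) with 1. replace (0 - M)%Z with (- M)%Z by lia.
      destruct (Rle_dec x (1 - r)); [fold r; lra|]. exfalso.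
      apply IZR_le in Hlow. rewrite plus_IZR, minus_IZR in Hlow. simpl in Hlow.
      assert ((IZR j0 + 1) * pow2 (- M) <= 1 - r) by (unfold r; nra). lra.
    + exists 0%Z, (R0 - 2 ^ M)%Z. intros x [Hx1 Hx2].
      change (pow2 0) with 1. replace (0 - M)%Z with (- M)%Z by lia. rewrite minus_IZR.
      destruct (Rle_dec x (1 - r)).
      * exfalso. assert (2 ^ M - R0 <= j0)%Z as H1 by lia. apply IZR_le in H1.
        rewrite minus_IZR in H1.
        assert (1 - r <= IZR j0 * pow2 (- M)) by (unfold r; nra). lra.
      * unfold r. nra.
Qed.

Definition thompson_x0 (x : R) : R :=
  if Rle_dec x (1/2) then x / 2 else if Rle_dec x (3/4) then x - 1/4 else 2 * x - 1.

Lemma V_at_thompson_x0 : V_at thompson_x0 2.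
Proof.
  unfold thompson_x0. split; [split; [|split]|split; [lia|]].
  - intros x [Hx1 Hx2]. destruct (Rle_dec x (1/2)); [|destruct (Rle_dec x (3/4))]; split; lra.
  - intros x y [Hx1 Hx2] [Hy1 Hy2].
    destruct (Rle_dec x (1/2)); [|destruct (Rle_dec x (3/4))];
    destruct (Rle_dec y (1/2)); try destruct (Rle_dec y (3/4)); lra.
  - intros y [Hy1 Hy2]. destruct (Rle_dec y (1/4)); [|destruct (Rle_dec y (1/2))].
    + exists (2 * y). split; [split; lra|]. destruct (Rle_dec (2 * y) (1/2)); lra.
    + exists (y + 1/4). split; [split; lra|].
      destruct (Rle_dec (y + 1/4) (1/2)); [lra|]. destruct (Rle_dec (y + 1/4) (3/4)); lra.
    + exists ((y + 1) / 2). split; [split; lra|].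
      destruct (Rle_dec ((y + 1) / 2) (1/2)); [lra|]. destruct (Rle_dec ((y + 1) / 2) (3/4)); lra.
  - intros j0 Hj0. apply dint_S1_range in Hj0; [|lia]. change (2 ^ 2)%Z with 4%Z in Hj0.
    assert (j0 = 0 \/ j0 = 1 \/ j0 = 2 \/ j0 = 3)%Z as Hc by lia.
    unfold dint, pow2.
    destruct Hc as [ -> | [ -> | [ -> | -> ] ] ]; simpl.
    + exists (-1)%Z, 0%Z. intros x Hx. simpl. destruct (Rle_dec x (1/2)); lra.
    + exists (-1)%Z, 0%Z. intros x Hx. simpl. destruct (Rle_dec x (1/2)); lra.
    + exists 0%Z, (-1)%Z. intros x Hx. simpl.
      destruct (Rle_dec x (1/2)); [lra|]. destruct (Rle_dec x (3/4)); lra.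
    + exists 1%Z, (-2)%Z. intros x Hx. simpl.
      destruct (Rle_dec x (1/2)); [lra|]. destruct (Rle_dec x (3/4)); lra.
Qed.

Lemma thompson_x0_top t x : (2 <= t)%Z -> S1 x -> x <= 1 - pow2 (- t) ->
  thompson_x0 x <= 1 - pow2 (- (t - 1)).
Proof.
  intros Ht [Hx1 Hx2] Hx.
  assert (E : pow2 (- t) * 2 = pow2 (- (t - 1))) by (rewrite <- pow2_1, <- pow2_add; f_equal; lia).
  pose proof (pow2_le (- (t - 1)) (-1) ltac:(lia)). rewrite pow2_m1 in H.
  unfold thompson_x0. destruct (Rle_dec x (1/2)); [lra|]. destruct (Rle_dec x (3/4)); lra.
Qed.

Lemma thompson_x0_bottom q x : (1 <= q)%Z -> 0 < x <= pow2 (- q) ->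
  0 < thompson_x0 x <= pow2 (- q - 1).
Proof.
  intros Hq Hx. pose proof (pow2_le (- q) (-1) ltac:(lia)). rewrite pow2_m1 in H.
  assert (pow2 (- q - 1) * 2 = pow2 (- q)) by (rewrite <- pow2_1, <- pow2_add; f_equal; lia).
  unfold thompson_x0. destruct (Rle_dec x (1/2)); lra.
Qed.

Lemma iter_thompson_x0_top (t : nat) y : S1 y -> y <= 1 - pow2 (- (Z.of_nat t + 1)) ->
  S1 (Nat.iter t thompson_x0 y) /\ Nat.iter t thompson_x0 y <= 1/2.
Proof.
  revert y. induction t as [|t IH]; intros y Hy Hle.
  - split; auto. simpl. change (- (Z.of_nat 0 + 1))%Z with (-1)%Z in Hle.
    rewrite pow2_m1 in Hle. lra.
  - rewrite Nat.iter_succ_r. apply IH.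
    + apply V_at_thompson_x0; auto.
    + replace (Z.of_nat t + 1)%Z with (Z.of_nat (S t) + 1 - 1)%Z by lia.
      apply thompson_x0_top; auto. lia.
Qed.

Lemma iter_thompson_x0_bottom (s : nat) q z : (1 <= q)%Z -> 0 < z <= pow2 (- q) ->
  0 < Nat.iter s thompson_x0 z <= pow2 (- q - Z.of_nat s).
Proof.
  revert q z. induction s as [|s IH]; intros q z Hq Hz.
  - simpl. rewrite Z.sub_0_r. auto.
  - rewrite Nat.iter_succ_r.
    replace (- q - Z.of_nat (S s))%Z with (- (q + 1) - Z.of_nat s)%Z by lia.
    apply IH; [lia|]. replace (- (q + 1))%Z with (- q - 1)%Z by lia.
    apply thompson_x0_bottom; auto.
Qed.

Lemma rotation_to_top m h x : dint_S1 (- m) h -> S1 x -> ~ dint (- m) h x ->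
  let r := IZR (2 ^ m - h - 1) * pow2 (- m) in
  S1 (rotation r x) /\ rotation r x <= 1 - pow2 (- m).
Proof.
  intros [Hh1 Hh2] [Hx1 Hx2] Hxh r.
  pose proof (pow2_pos (- m)). pose proof (dint_S1_level _ _ (conj Hh1 Hh2)).
  assert (Hr : r = 1 - (IZR h + 1) * pow2 (- m)).
  { pose proof (pow2_opp_l m) as Hopp. rewrite (pow2_IZR m) in Hopp by lia.
    unfold r. rewrite !minus_IZR. simpl. nra. }
  apply IZR_le in Hh1. unfold rotation, dint in *.
  destruct (Rle_dec x (1 - r)).
  - assert (x <= IZR h * pow2 (- m)) by (apply Rnot_lt_le; intro; apply Hxh; split; lra).
    split; [split|]; nra.
  - split; [split|]; nra.
Qed.

Lemma rotation_into_dint e j w : dint_S1 e j -> 0 < w <= pow2 e ->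
  dint e j (rotation (IZR j * pow2 e) w).
Proof.
  intros [Hj1 Hj2] Hw. unfold rotation.
  destruct (Rle_dec w (1 - IZR j * pow2 e)); [|lra]. unfold dint. lra.
Qed.

(* Rotate the excluded interval to the top of S^1, push everything else into (0, 2^e] with
   x_0, then rotate (0, 2^e] onto the target interval. *)
Lemma exists_V_squeezing e j m h : dint_S1 e j -> dint_S1 (- m) h -> (1 <= m)%Z ->
  exists g, in_V g /\ forall x, S1 x -> ~ dint (- m) h x -> dint e j (g x).
Proof.
  intros Hej Hmh Hm.
  pose proof (dint_S1_level _ _ Hej) as He.
  set (r1 := IZR (2 ^ m - h - 1) * pow2 (- m)).
  set (r2 := IZR j * pow2 e).
  set (t := Z.to_nat (m - 1)). set (s := Z.to_nat (- e)).
  exists (fun x => rotation r2 (Nat.iter s thompson_x0 (Nat.iter t thompson_x0 (rotation r1 x)))).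
  split.
  - destruct (V_at_iter _ _ s V_at_thompson_x0) as [Ns Hs].
    destruct (V_at_iter _ _ t V_at_thompson_x0) as [Nt Ht].
    assert (H1 : V_at (rotation r1) m).
    { apply V_at_rotation; [lia|]. apply dint_S1_range in Hmh; lia. }
    assert (H2 : V_at (rotation r2) (- e)).
    { unfold r2. replace e with (- - e)%Z at 1 by lia. apply V_at_rotation; [lia|].
      apply dint_S1_range; [lia|]. rewrite Z.opp_involutive. exact Hej. }
    apply (in_V_of_V_at _ _
      (V_at_comp _ _ _ _ H2 (V_at_comp _ _ _ _ Hs (V_at_comp _ _ _ _ Ht H1)))).
  - intros x Hx Hxh.
    destruct (rotation_to_top m h x Hmh Hx Hxh) as [Hy1 Hy2]. fold r1 in Hy1, Hy2.
    destruct (iter_thompson_x0_top t (rotation r1 x) Hy1) as [Hz1 Hz2].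
    { unfold t. rewrite Z2Nat.id by lia. replace (m - 1 + 1)%Z with m by lia. exact Hy2. }
    apply rotation_into_dint; auto.
    assert (Hz : 0 < Nat.iter t thompson_x0 (rotation r1 x) <= pow2 (- 1))
      by (split; [apply Hz1 | unfold pow2; simpl; lra]).
    destruct (iter_thompson_x0_bottom s 1 _ ltac:(lia) Hz) as [Hw1 Hw2].
    split; auto. eapply Rle_trans; [exact Hw2|]. apply pow2_le. unfold s. lia.
Qed.

(** * A weakly wandering dyadic interval *)

Lemma least_nat (P : nat -> Prop) : (exists n, P n) ->
  exists n, P n /\ forall m, (m < n)%nat -> ~ P m.
Proof.
  intros Hex.
  destruct (dec_inh_nat_subset_has_unique_least_element P (fun n => classic (P n)) Hex)
    as [n [[Hn Hmin] _]].
  exists n. split; auto. intros m Hm HPm. specialize (Hmin m HPm). lia.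
Qed.

Lemma iterates_leave_of_trap (phi : R -> R) (p : nat) (J E K : R -> Prop) :
  (1 <= p)%nat -> (forall x, E x -> J x) -> (forall x, K x -> J x) -> (forall x, K x -> ~ E x) ->
  (forall x, J x -> E (Nat.iter p phi x)) ->
  (forall r, (0 < r < p)%nat -> forall x, J x -> ~ J (Nat.iter r phi x)) ->
  forall n, (1 <= n)%nat -> forall x, K x -> ~ K (Nat.iter n phi x).
Proof.
  intros Hp HEJ HKJ HKE HJE Hr.
  assert (Hq : forall q x, (1 <= q)%nat -> J x -> E (Nat.iter (p * q) phi x)).
  { induction q as [|[|q] IH]; intros x Hq Hx; [lia| rewrite Nat.mul_1_r; auto|].
    rewrite Nat.mul_succ_r, Nat.add_comm, Nat.iter_add. apply HJE, HEJ, IH; auto. lia. }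
  intros n Hn x Hx. pose proof (Nat.div_mod n p ltac:(lia)) as Hd.
  pose proof (Nat.mod_upper_bound n p ltac:(lia)) as Hm.
  set (q := (n / p)%nat) in *. set (r := (n mod p)%nat) in *.
  rewrite Hd, Nat.add_comm, Nat.iter_add. intros HK.
  destruct q as [|q].
  - rewrite Nat.mul_0_r in *. exact (Hr r ltac:(lia) x (HKJ x Hx) (HKJ _ HK)).
  - assert (HE : E (Nat.iter (p * S q) phi x)) by (apply Hq; auto; lia).
    destruct r as [|r].
    + exact (HKE _ HK HE).
    + exact (Hr (S r) ltac:(lia) _ (HEJ _ HE) (HKJ _ HK)).
Qed.

Lemma transitive_has_loop {A : Type} (Rel : A -> A -> Prop) :
  (forall a b c, Rel a b -> Rel b c -> Rel a c) ->
  forall L : list A, L <> nil -> (forall w, In w L -> exists w', In w' L /\ Rel w w') ->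
  exists w, In w L /\ Rel w w.
Proof.
  intros Htrans L. remember (length L) as n eqn:HL. revert L HL.
  induction n as [n IH] using (well_founded_induction lt_wf).
  intros [|x L0] HL Hne Hsucc; [contradiction|].
  destruct (classic (Rel x x)) as [Hxx|Hxx]; [exists x; split; simpl; auto|].
  (* restrict to the successors of [x]: a smaller set, still closed under successors *)
  set (f := fun w => if excluded_middle_informative (Rel x w) then true else false).
  set (L' := filter f (x :: L0)).
  assert (Hf : forall w, In w L' <-> In w (x :: L0) /\ Rel x w).
  { intros w. unfold L'. rewrite filter_In. unfold f.
    destruct (excluded_middle_informative (Rel x w)); intuition congruence. }
  assert (Hlen : (length L' < n)%nat).
  { subst n. pose proof (filter_length_le f (x :: L0)). fold L' in H.
    enough (length L' <> length (x :: L0)) by lia. intros E.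
    apply filter_length_forallb, forallb_forall with (x := x) in E; simpl; auto.
    unfold f in E.
    destruct (excluded_middle_informative (Rel x x)); [contradiction | discriminate]. }
  destruct (Hsucc x (or_introl eq_refl)) as [x' [Hx' Rx']].
  destruct (IH _ Hlen L' eq_refl) as [w [Hw Rw]].
  - intros E. assert (In x' L') as Hin by (apply Hf; auto). rewrite E in Hin. contradiction.
  - intros w Hw. apply Hf in Hw as [Hw Rw]. destruct (Hsucc w Hw) as [w' [Hw' Rw']].
    exists w'. split; auto. apply Hf. split; eauto.
  - exists w. split; auto. apply Hf in Hw. tauto.
Qed.

Section Dynamics.

Variables (g : R -> R) (N : Z).
Hypothesis Hg : V_at g N.

Definition has_wandering_dint : Prop :=
  exists e j, dint_S1 e j /\ forward_wandering g (dint e j).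

Definition first_return (e j : Z) (p : nat) : Prop :=
  (1 <= p)%nat /\ (exists x, dint e j x /\ dint e j (Nat.iter p g x)) /\
  forall r, (0 < r < p)%nat -> forall x, dint e j x -> ~ dint e j (Nat.iter r g x).

Lemma wandering_of_contracting_return e j p e' j' : dint_S1 e j -> first_return e j p ->
  maps_affinely g p e j e' j' -> (e' < e)%Z -> has_wandering_dint.
Proof.
  intros Hs [Hp [[x0 [Hx0 Hx0']] Hr]] HM Hlt.
  assert (HS : dint_sub e' j' e j).
  { apply dint_sub_of_meet; [lia|]. exists (Nat.iter p g x0).
    split; auto. eapply maps_affinely_into; eauto. }
  destruct (dint_half_avoiding e j e' j' Hlt) as [b [Hb HK]].
  exists (e - 1)%Z, (2 * j + b)%Z. split; [eapply dint_sub_S1; eauto; apply dint_half_sub; auto|].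
  intros n Hn. right.
  apply (iterates_leave_of_trap g p (dint e j) (dint e' j')); auto.
  - intros y Hy; apply (dint_half_sub e j b Hb); auto.
  - intros y Hy; eapply maps_affinely_into; eauto.
Qed.

Lemma wandering_of_periodic_return e j p j' : dint_S1 e j -> first_return e j p ->
  maps_affinely g p e j e j' -> has_wandering_dint.
Proof.
  intros Hs [Hp [[x0 [Hx0 Hx0']] Hr]] HM.
  assert (j' = j) as ->.
  { symmetry. apply (dint_meet_same_level e). exists (Nat.iter p g x0).
    split; auto. eapply maps_affinely_into; eauto. }
  assert (Hid : forall x, dint e j x -> Nat.iter p g x = x).
  { intros x Hx. rewrite (HM x Hx), Z.sub_diag. unfold pow2; simpl. ring. }
  assert (Hq : forall q x, dint e j x -> Nat.iter (p * q) g x = x).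
  { induction q; intros x Hx; [rewrite Nat.mul_0_r; reflexivity|].
    rewrite Nat.mul_succ_r, Nat.iter_add, Hid; auto. }
  exists e, j. split; auto. intros n Hn.
  pose proof (Nat.div_mod n p ltac:(lia)) as Hd.
  pose proof (Nat.mod_upper_bound n p ltac:(lia)) as Hmd.
  destruct (Nat.eq_dec (n mod p) 0) as [H0|H0]; [left|right]; intros x Hx;
    rewrite Hd, Nat.add_comm, Nat.iter_add, Hq; auto.
  - rewrite H0. reflexivity.
  - apply Hr; auto. lia.
Qed.

Lemma wandering_of_expanding_return e j p e' j' : dint_S1 e j -> first_return e j p ->
  maps_affinely g p e j e' j' -> (e < e')%Z -> has_wandering_dint.
Proof.
  intros Hs [Hp [[x0 [Hx0 Hx0']] Hr]] HM Hgt. pose proof (proj1 Hg) as Hb.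
  assert (HS : dint_sub e j e' j').
  { apply dint_sub_of_meet; [lia|]. exists (Nat.iter p g x0).
    split; auto. eapply maps_affinely_into; eauto. }
  pose proof (maps_affinely_S1 _ _ _ _ _ _ (proj1 Hb) HM Hs) as Hs'.
  assert (HJ : forall y, dint e j y -> S1 y) by (intros; eapply S1_of_dint; eauto).
  assert (HK : forall y, dint e' j' y -> S1 y) by (intros; eapply S1_of_dint; eauto).
  (* the inverse of [g] contracts [dint e' j'] into [dint e j] *)
  assert (Hinv : forall y, dint e' j' y ->
            exists x, dint e j x /\ Nat.iter p (circ_inv g) y = x /\ Nat.iter p g x = y).
  { intros y Hy. destruct (maps_affinely_onto _ _ _ _ _ _ _ HM Hy) as [x [Hx <-]].
    exists x. split; [|split]; auto. apply iter_circ_inv_l; auto. }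
  destruct (dint_half_avoiding e' j' e j Hgt) as [b [Hb' HKb]].
  assert (Hhalf : dint_sub (e' - 1) (2 * j' + b) e' j') by (apply dint_half_sub; auto).
  assert (Hleave : forall n, (1 <= n)%nat -> forall y, dint (e' - 1) (2 * j' + b) y ->
                    ~ dint (e' - 1) (2 * j' + b) (Nat.iter n (circ_inv g) y)).
  { apply (iterates_leave_of_trap (circ_inv g) p (dint e' j') (dint e j)); auto.
    - intros y Hy. destruct (Hinv y Hy) as [x [Hx [-> _]]]. exact Hx.
    - intros r Hr' y Hy Hy'. destruct (Hinv y Hy) as [x [Hx [_ <-]]].
      (* [g^-r (g^p x) = g^(p-r) x] is [g^p x'] for some [x'] in [dint e j], and then
         [x = g^r x'] is an early return of [x'] *)
      replace p with (r + (p - r))%nat in Hy' by lia.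
      pose proof (HJ x Hx).
      rewrite Nat.iter_add, iter_circ_inv_l in Hy' by solve_S1.
      destruct (Hinv _ Hy') as [x' [Hx' [_ Hxx]]].
      assert (Ep : Nat.iter p g x' = Nat.iter (p - r) g (Nat.iter r g x'))
        by (rewrite <- Nat.iter_add; f_equal; lia).
      rewrite Ep in Hxx. pose proof (HJ x' Hx').
      assert (Hxeq : x = Nat.iter r g x') by (apply (iter_inj_S1 g Hb (p - r)); solve_S1; auto).
      apply (Hr r Hr' x' Hx'). rewrite <- Hxeq. exact Hx. }
  exists (e' - 1)%Z, (2 * j' + b)%Z. split; [eapply dint_sub_S1; eauto|].
  intros n Hn. right. intros y Hy Hy'. apply (Hleave n Hn _ Hy').
  rewrite iter_circ_inv_l; auto.
Qed.

Lemma wandering_of_first_return e j p : dint_S1 e j -> first_return e j p ->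
  (exists e' j', maps_affinely g p e j e' j') -> has_wandering_dint.
Proof.
  intros Hs Hret [e' [j' HM]]. destruct (Z.lt_trichotomy e' e) as [Hlt|[->|Hgt]].
  - eapply wandering_of_contracting_return; eauto.
  - eapply wandering_of_periodic_return; eauto.
  - eapply wandering_of_expanding_return; eauto.
Qed.

(* [e' <= -N]: the image lies in a single piece of [g], so the orbit continues affinely. *)
Definition affine_orbit (e j : Z) (d : nat) : Prop :=
  forall i, (i < d)%nat -> exists e' j', maps_affinely g i e j e' j' /\ (e' <= - N)%Z.

Lemma affine_orbit_maps e j d : dint_S1 e j -> affine_orbit e j d ->
  exists e' j', maps_affinely g d e j e' j'.
Proof.
  intros Hs HG. destruct Hg as [(Hm & _) [HN HL]]. destruct d as [|d].
  - exists e, j. apply maps_affinely_0.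
  - destruct (HG d ltac:(lia)) as [e' [j' [HM He']]].
    pose proof (maps_affinely_S1 _ _ _ _ _ _ Hm HM Hs) as Hs'.
    destruct (dint_sub_containing e' j' (- N) Hs' He' ltac:(lia)) as [j0 [HS Hj0]].
    destruct (HL j0 Hj0) as [k [C HC]].
    pose proof (maps_affinely_of_piece g N j0 k C e' j' HC HS) as HM1.
    do 2 eexists. exact (maps_affinely_comp _ _ _ _ _ _ _ _ _ HM HM1).
Qed.

Lemma affine_orbit_restrict e j d e2 j2 : affine_orbit e j d -> dint_sub e2 j2 e j ->
  affine_orbit e2 j2 d.
Proof.
  intros HG HS i Hi. destruct (HG i Hi) as [e' [j' [HM He']]].
  pose proof (dint_sub_level _ _ _ _ HS).
  do 2 eexists. split; [apply (maps_affinely_restrict _ _ _ _ _ _ _ _ HM HS)|]. lia.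
Qed.

Lemma wandering_of_return e j D : dint_S1 e j -> affine_orbit e j D -> (1 <= D)%nat ->
  (exists x, dint e j x /\ dint e j (Nat.iter D g x)) -> has_wandering_dint.
Proof.
  intros Hs HG HD Hx.
  destruct (least_nat (fun n => (1 <= n)%nat /\ exists x, dint e j x /\ dint e j (Nat.iter n g x)))
    as [p [[Hp Hpx] Hmin]]; [eauto|].
  assert (HpD : (p <= D)%nat) by (apply Nat.nlt_ge; intros HDp; exact (Hmin D HDp (conj HD Hx))).
  apply (wandering_of_first_return e j p Hs).
  - split; [|split]; auto. intros r Hr x Hx1 Hx2. apply (Hmin r); [lia|]. split; [lia|]. eauto.
  - apply affine_orbit_maps; auto. intros i Hi. apply HG. lia.
Qed.

Lemma wandering_of_infinite_orbit w : dint_S1 (- N) w -> (forall d, affine_orbit (- N) w d) ->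
  has_wandering_dint.
Proof.
  intros Hs HG.
  destruct (classic (exists n, (1 <= n)%nat /\
                       exists x, dint (- N) w x /\ dint (- N) w (Nat.iter n g x)))
    as [[n [Hn Hx]]|Hno].
  - exact (wandering_of_return _ _ n Hs (HG n) Hn Hx).
  - exists (- N)%Z, w. split; auto. intros n Hn. right. intros x Hx Hx'. apply Hno; eauto.
Qed.

Definition returns_to (w w' : Z) : Prop :=
  exists e j D, dint_sub e j (- N) w /\ (1 <= D)%nat /\
    affine_orbit e j D /\ maps_affinely g D e j (- N) w'.

Lemma returns_to_trans w1 w2 w3 : returns_to w1 w2 -> returns_to w2 w3 -> returns_to w1 w3.
Proof.
  intros (e1 & j1 & D1 & HS1 & HD1 & HG1 & HM1) (e2 & j2 & D2 & HS2 & HD2 & HG2 & HM2).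
  destruct (maps_affinely_pullback _ _ _ _ _ _ _ _ HM1 HS2) as [e [j [HS HM]]].
  exists e, j, (D2 + D1)%nat. split; [intros y Hy; auto|]. split; [lia|]. split.
  - intros i Hi. destruct (Nat.lt_ge_cases i D1) as [Hlt|Hge].
    + apply (affine_orbit_restrict _ _ _ _ _ HG1 HS); auto.
    + destruct (HG2 (i - D1)%nat ltac:(lia)) as [e' [j' [H1 H2]]].
      pose proof (maps_affinely_comp _ _ _ _ _ _ _ _ _ HM H1) as H.
      replace (i - D1 + D1)%nat with i in H by lia. eauto.
  - exact (maps_affinely_comp _ _ _ _ _ _ _ _ _ HM HM2).
Qed.

Lemma wandering_of_returns_to_self w : dint_S1 (- N) w -> returns_to w w -> has_wandering_dint.
Proof.
  intros Hs (e & j & D & HS & HD & HG & HM).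
  apply (wandering_of_return e j D); auto; [eapply dint_sub_S1; eauto|].
  destruct (maps_affinely_onto _ _ _ _ _ _ _ HM (HS _ (dint_right e j))) as [x [Hx Hx']].
  exists x. split; auto. rewrite Hx'. apply dint_right.
Qed.

Lemma exists_returns_to w : dint_S1 (- N) w -> ~ (forall d, affine_orbit (- N) w d) ->
  exists w', dint_S1 (- N) w' /\ returns_to w w'.
Proof.
  intros Hs HnA. destruct Hg as [(Hm & _) [HN _]].
  apply not_all_ex_not in HnA. destruct (least_nat _ HnA) as [d1 [Hd1 Hmin]].
  (* [d1] is the first time the orbit leaves the pieces; just before, at time [d], the image
     interval is longer than [2^-N] and contains a whole interval [dint (-N) w'] *)
  assert (HG1 : affine_orbit (- N) w 1).
  { intros i Hi. replace i with 0%nat by lia. exists (- N)%Z, w.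
    split; [apply maps_affinely_0 | lia]. }
  destruct d1 as [|[|d']]; [exfalso; apply Hd1; intros i Hi; lia | contradiction|].
  set (d := S d') in *.
  assert (HGd : affine_orbit (- N) w d) by (apply NNPP; intro; apply (Hmin d); auto).
  destruct (affine_orbit_maps _ _ d Hs HGd) as [e' [j' HM]].
  assert (He' : (- N < e')%Z).
  { apply Z.nle_gt. intros He'. apply Hd1. intros i Hi.
    destruct (Nat.eq_dec i d) as [->|]; [eauto | apply HGd; lia]. }
  pose proof (dint_S1_level _ _ (maps_affinely_S1 _ _ _ _ _ _ Hm HM Hs)) as He'0.
  set (w' := (j' * 2 ^ (e' + N))%Z).
  assert (HS' : dint_sub (- N) w' e' j').
  { apply dint_sub_of_bounds; [lia|]. replace (e' - - N)%Z with (e' + N)%Z by lia.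
    pose proof (Z.pow_pos_nonneg 2 (e' + N) ltac:(lia) ltac:(lia)). unfold w'. lia. }
  destruct (maps_affinely_pullback _ _ _ _ _ _ _ _ HM HS') as [e [j [HS HMT]]].
  exists w'. split; [eapply dint_sub_S1; eauto; eapply maps_affinely_S1; eauto|].
  exists e, j, d. split; auto. split; [unfold d; lia|]. split; auto.
  eapply affine_orbit_restrict; eauto.
Qed.

(* The [2^N] intervals of level [-N] either contain one with an infinite affine orbit, or each
   of them returns to another one; [returns_to] being transitive, one of them returns to itself. *)
Theorem exists_wandering_dint : has_wandering_dint.
Proof.
  pose proof Hg as (_ & HN & _).
  destruct (classic (exists w, dint_S1 (- N) w /\ forall d, affine_orbit (- N) w d))
    as [[w [Hw HA]]|HnA]; [eapply wandering_of_infinite_orbit; eauto|].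
  set (L := map Z.of_nat (seq 0 (Z.to_nat (2 ^ N)))).
  pose proof (Z.pow_pos_nonneg 2 N ltac:(lia) HN).
  assert (HL : forall w, In w L <-> dint_S1 (- N) w).
  { intros w. rewrite dint_S1_range by auto. unfold L. rewrite in_map_iff. split.
    - intros [k [<- Hk]]. apply in_seq in Hk. lia.
    - intros Hw. exists (Z.to_nat w). split; [lia|]. apply in_seq. lia. }
  destruct (transitive_has_loop returns_to returns_to_trans L) as [w [Hw Rw]].
  - intros E. assert (In 0%Z L) as H0 by (apply HL, dint_S1_range; lia).
    rewrite E in H0. contradiction.
  - intros w Hw. apply HL in Hw.
    destruct (exists_returns_to w Hw) as [w' [Hw' R']]; [intros HA; apply HnA; eauto|].
    exists w'. split; auto. apply HL; auto.
  - apply HL in Hw. eapply wandering_of_returns_to_self; eauto.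
Qed.

End Dynamics.

(** * Closed subsets of the circle *)

Lemma exists_small_pow2 eps : 0 < eps -> exists m, (1 <= m)%Z /\ pow2 (- m) < eps.
Proof.
  intros Heps. destruct (pow_lt_1_zero (/ 2) ltac:(rewrite Rabs_pos_eq; lra) eps Heps) as [n Hn].
  exists (Z.of_nat (S n)). split; [lia|].
  specialize (Hn (S n) ltac:(lia)). rewrite Rabs_pos_eq in Hn by (apply pow_le; lra).
  unfold pow2. rewrite powerRZ_neg', <- pow_powerRZ, <- pow_inv. exact Hn.
Qed.

Lemma closed_avoids_dint A x0 : circle_closed A -> S1 x0 -> ~ A x0 ->
  exists m h, (1 <= m)%Z /\ dint_S1 (- m) h /\ forall y, A y -> ~ dint (- m) h y.
Proof.
  intros [HAS1 HAcl] Hx0 Hx0A.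
  assert (Heps : exists eps, eps > 0 /\ forall y, A y -> eps <= cdist x0 y).
  { apply NNPP. intros Hc. apply Hx0A, HAcl; auto. intros eps Heps.
    apply NNPP. intros Hc2. apply Hc. exists eps. split; auto. intros y Hy.
    apply Rnot_lt_le. intros Hlt. apply Hc2. eauto. }
  destruct Heps as [eps [Heps HAe]].
  destruct (exists_small_pow2 eps Heps) as [m [Hm Hpm]].
  destruct (dint_containing (- m) x0 ltac:(lia) Hx0) as [h [Hxh Hh]].
  exists m, h. split; [|split]; auto. intros y Hy Hyh. apply HAe in Hy.
  unfold cdist in Hy. pose proof (Rmin_l (Rabs (x0 - y)) (1 - Rabs (x0 - y))).
  destruct Hxh, Hyh. assert (Rabs (x0 - y) < pow2 (- m)) by (apply Rabs_def1; lra). lra.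
Qed.

Theorem corollary4p4 (gamma : R -> R) (A : R -> Prop) :
  in_V gamma ->
  circle_closed A ->
  (exists x, S1 x /\ ~ A x) ->
  exists g : R -> R, in_V g /\ weakly_wandering (conjV gamma g) A.
Proof.
  intros Hgam HA [x0 [Hx0 Hx0A]].
  destruct (V_at_of_in_V gamma Hgam) as [N HN].
  destruct (exists_wandering_dint gamma N HN) as (e & j & Hej & Hwand).
  destruct (closed_avoids_dint A x0 HA Hx0 Hx0A) as (m & h & Hm & Hmh & Havoid).
  destruct (exists_V_squeezing e j m h Hej Hmh Hm) as (g & Hg & Hsqueeze).
  exists g. split; [exact Hg|].
  apply (weakly_wandering_conjV gamma g (dint e j)).
  - apply bij_S1_of_in_V, Hgam.
  - apply bij_S1_of_in_V, Hg.
  - apply HA.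
  - intros x Hx. apply Hsqueeze; [apply HA | apply Havoid]; auto.
  - apply weakly_wandering_of_forward; [apply bij_S1_of_in_V, Hgam | |exact Hwand].
    intros x. apply S1_of_dint, Hej.
Qed.
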